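(* Let $A\in\mathbb{R}^{n\times n}$, $C\in\mathbb{R}^{p\times n}$ and $s\in\mathbb{N}$. If $(A,C)$ is not $s$-sparse detectable, then for every $v\in\mathbb{N}$ and every matrix $D\in\mathbb{R}^{v\times p}$, $(A,C)$ is not $s$-sparse detectable with respect to $D$.
   Context: A pair $(A,M)$ is detectable if every eigenvalue of $A$ of modulus $\ge1$ is observable, i.e. $Mw\ne0$ for every (complex) eigenvector $w$ of $A$ whose eigenvalue has modulus $\ge 1$. Let $\mathbf{E}_p=\{\mathbf{e}_1,\dots,\mathbf{e}_p\}$ be the standard basis of $\mathbb{R}^p$. For $D\in\mathbb{R}^{v\times p}$ and $k\in\mathbb{N}$, let $\mathbf{P}_k(D)$ be the set of all real matrices $L$ with $v$ columns (any number of rows) such that $\ker(L)=D(\mathrm{span}\,V)$ for some $V\subseteq\mathbf{E}_p$ with $|V|\le k$. $(A,C)$ is $k$-sparse detectable with respect to $D$ if $(A,LDC)$ is detectable for every $L\in\mathbf{P}_k(D)$; $(A,C)$ is $k$-sparse detectable if it is $k$-sparse detectable with respect to $I_p$. *)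

From HB Require Import structures.
From mathcomp Require Import all_boot all_order all_algebra.
From mathcomp Require Import reals.
From mathcomp.real_closed Require Import complex.
Set Implicit Arguments. Unset Strict Implicit. Unset Printing Implicit Defensive.
Import Order.TTheory GRing.Theory Num.Theory.
Local Open Scope ring_scope.

Definition cmx (R : realType) (m n : nat) (M : 'M[R]_(m, n)) : 'M[complex R]_(m, n) :=
  map_mx (fun x : R => x%:C)%C M.

Definition detectable (R : realType) (n q : nat) (A : 'M[R]_n) (M : 'M[R]_(q, n)) : Prop :=
  forall (lam : complex R) (w : 'cV[complex R]_n),
    w != 0 -> cmx A *m w = lam *: w -> 1 <= `|lam| -> cmx M *m w != 0.

Definition ker_eq_img (R : realType) (q v p : nat) (L : 'M[R]_(q, v)) (D : 'M[R]_(v, p))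
    (V : {set 'I_p}) : Prop :=
  forall x : 'cV[R]_v,
    L *m x = 0 <->
    exists y : 'cV[R]_p, (forall i, i \notin V -> y i 0 = 0) /\ x = D *m y.

Definition in_Pk (R : realType) (q v p : nat) (k : nat) (D : 'M[R]_(v, p))
    (L : 'M[R]_(q, v)) : Prop :=
  exists V : {set 'I_p}, (#|V| <= k)%N /\ ker_eq_img L D V.

Definition sparse_detectable_wrt (R : realType) (n p v : nat) (k : nat)
    (A : 'M[R]_n) (C : 'M[R]_(p, n)) (D : 'M[R]_(v, p)) : Prop :=
  forall (q : nat) (L : 'M[R]_(q, v)), in_Pk k D L -> detectable A (L *m D *m C).

Definition sparse_detectable (R : realType) (n p : nat) (k : nat)
    (A : 'M[R]_n) (C : 'M[R]_(p, n)) : Prop :=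
  sparse_detectable_wrt k A C (1%:M : 'M[R]_p).

From HB Require Import structures.
From mathcomp Require Import all_boot all_order all_algebra.
From mathcomp Require Import reals.
From mathcomp.real_closed Require Import complex.
Set Implicit Arguments. Unset Strict Implicit. Unset Printing Implicit Defensive.
Import Order.TTheory GRing.Theory Num.Theory.
Local Open Scope ring_scope.

(* If (A, C) fails to be s-sparse detectable, some unstable eigenvector w has
   C w in span V with |V| <= s. Any L' with ker L' = D (span V) then kills
   D C w, so (A, L' D C) is not detectable either. Such an L' always exists:
   take an annihilator of the column space of D restricted to the columns in
   V. Real matrices act on the real and imaginary parts of a complex vector
   separately, so all kernel conditions may be checked on real vectors. *)

Section RealPartsOfComplexProducts.

Variable R : realType.

Lemma Re_cmx_mul q n (N : 'M[R]_(q, n)) (w : 'cV[complex R]_n) :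
  map_mx (@complex.Re R) (cmx N *m w) = N *m map_mx (@complex.Re R) w.
Proof.
apply/matrixP => i j; rewrite !mxE.
rewrite (big_morph (@complex.Re R) (id1 := 0) (op1 := +%R)) //; last first.
  by move=> [a b] [c d].
apply: eq_bigr => k _; rewrite !mxE; case: (w k j) => a b /=.
by rewrite mul0r subr0.
Qed.

Lemma Im_cmx_mul q n (N : 'M[R]_(q, n)) (w : 'cV[complex R]_n) :
  map_mx (@complex.Im R) (cmx N *m w) = N *m map_mx (@complex.Im R) w.
Proof.
apply/matrixP => i j; rewrite !mxE.
rewrite (big_morph (@complex.Im R) (id1 := 0) (op1 := +%R)) //; last first.
  by move=> [a b] [c d].
apply: eq_bigr => k _; rewrite !mxE; case: (w k j) => a b /=.
by rewrite mul0r addr0.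
Qed.

Lemma cmx_mul_eq0 q n (N : 'M[R]_(q, n)) (w : 'cV[complex R]_n) :
  cmx N *m w = 0 <->
  N *m map_mx (@complex.Re R) w = 0 /\ N *m map_mx (@complex.Im R) w = 0.
Proof.
rewrite -Re_cmx_mul -Im_cmx_mul; split.
  by move=> ->; split; apply/matrixP => i j; rewrite !mxE.
move=> [/matrixP re0 /matrixP im0]; apply/matrixP => i j.
move: (re0 i j) (im0 i j); rewrite !mxE.
by case: (\sum_k _) => a b /= -> ->.
Qed.

Lemma detectable_ker_sub n q q' (A : 'M[R]_n) (M : 'M[R]_(q, n)) (N : 'M[R]_(q', n)) :
  (forall x : 'cV[R]_n, N *m x = 0 -> M *m x = 0) ->
  detectable A M -> detectable A N.
Proof.
move=> kerNM detM lam w w_neq0 eigw lam_ge1.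
apply: contra (detM lam w w_neq0 eigw lam_ge1) => /eqP/cmx_mul_eq0 [Nre0 Nim0].
by apply/eqP/cmx_mul_eq0; split; apply: kerNM.
Qed.

End RealPartsOfComplexProducts.

Section KernelRealization.

Variable R : realType.

Definition colspace_annihilator v m (B : 'M[R]_(v, m)) : 'M[R]_v :=
  (cokermx B^T)^T.

Lemma colspace_annihilatorP v m (B : 'M[R]_(v, m)) (x : 'cV[R]_v) :
  colspace_annihilator B *m x = 0 <-> exists y, x = B *m y.
Proof.
rewrite /colspace_annihilator -[_ *m x]trmxK trmx_mul trmxK.
split=> [/(congr1 trmx) | [y ->]].
  rewrite trmx0 trmxK => /eqP; rewrite -submxE => /submxP [z xz].
  by exists z^T; rewrite -[x]trmxK xz trmx_mul trmxK.
by apply/eqP; rewrite trmx_eq0 -submxE trmx_mul submxMl.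
Qed.

Definition support_proj p (V : {set 'I_p}) : 'M[R]_p :=
  diag_mx (\row_i ((i \in V)%:R : R)).

Lemma support_projE p (V : {set 'I_p}) (y : 'cV[R]_p) i j :
  (support_proj V *m y) i j = (i \in V)%:R * y i j.
Proof. by rewrite mul_diag_mx !mxE. Qed.

Lemma support_proj_id p (V : {set 'I_p}) (y : 'cV[R]_p) :
  (forall i, i \notin V -> y i 0 = 0) -> support_proj V *m y = y.
Proof.
move=> suppy; apply/matrixP => i j; rewrite support_projE (ord1 j).
by case: (boolP (i \in V)) => [_ | /suppy ->]; rewrite ?mul1r ?mulr0.
Qed.

Definition kernel_matrix v p (D : 'M[R]_(v, p)) (V : {set 'I_p}) : 'M[R]_v :=
  colspace_annihilator (D *m support_proj V).

Lemma ker_eq_img_kernel_matrix v p (D : 'M[R]_(v, p)) (V : {set 'I_p}) :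
  ker_eq_img (kernel_matrix D V) D V.
Proof.
move=> x; rewrite colspace_annihilatorP; split=> [[z ->] | [y [suppy ->]]].
  exists (support_proj V *m z); split; last by rewrite mulmxA.
  by move=> i /negbTE iNV; rewrite support_projE iNV mul0r.
by exists y; rewrite -mulmxA support_proj_id.
Qed.

Lemma in_Pk_kernel_matrix k v p (D : 'M[R]_(v, p)) (V : {set 'I_p}) :
  (#|V| <= k)%N -> in_Pk k D (kernel_matrix D V).
Proof. by move=> Vk; exists V; split; last exact: ker_eq_img_kernel_matrix. Qed.

Lemma ker_eq_img_id_mul q q' v p (L : 'M[R]_(q, p)) (M : 'M[R]_(q', v))
    (D : 'M[R]_(v, p)) (V : {set 'I_p}) (u : 'cV[R]_p) :
  ker_eq_img L 1%:M V -> ker_eq_img M D V -> L *m u = 0 -> M *m (D *m u) = 0.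
Proof.
move=> kerL kerM /kerL [y [suppy uy]].
by apply/kerM; exists y; rewrite uy mul1mx.
Qed.

End KernelRealization.

Theorem lemma1 (R : realType) (n p : nat) (A : 'M[R]_n) (C : 'M[R]_(p, n)) (s : nat) :
  ~ sparse_detectable s A C ->
  forall (v : nat) (D : 'M[R]_(v, p)), ~ sparse_detectable_wrt s A C D.
Proof.
move=> not_sdet v D sdetD; apply: not_sdet => q L [V [Vs kerL]].
apply: (detectable_ker_sub _ (sdetD _ _ (in_Pk_kernel_matrix D Vs))) => x.
rewrite -!mulmxA mul1mx.
exact: ker_eq_img_id_mul kerL (ker_eq_img_kernel_matrix D V).
Qed.
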